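(* Let $\mathcal{L}_{\rm F}$ be the Fibonacci language and let ${\rm S}:\mathcal{L}_{\rm F}\to\mathbb{N}$ be a homomorphism. Let $\mathcal{E}=\{(1,1),(1,2),(1,3),(2,1)\}$. If $({\rm S}(0),{\rm S}(1))\in\mathcal{E}$ then $\mathbb{N}\setminus{\rm S}(\mathcal{L}_{\rm F})$ is empty; otherwise $\mathbb{N}\setminus{\rm S}(\mathcal{L}_{\rm F})$ is infinite.
   Context: $\mathbb{N}=\{1,2,3,\dots\}$ and $[x]$ denotes the integer part (floor) of $x$. Let $\Phi=(1+\sqrt5)/2$ and $\alpha=2-\Phi$. The characteristic word $c_\alpha=(c_\alpha(n))_{n\ge0}$ is the infinite word over $\{0,1\}$ with $c_\alpha(n)=[(n+2)\alpha]-[(n+1)\alpha]$ (the infinite Fibonacci word). The Fibonacci language $\mathcal{L}_{\rm F}$ is the set of all nonempty finite words occurring as factors of $c_\alpha$. A homomorphism ${\rm S}:\mathcal{L}_{\rm F}\to\mathbb{N}$ is a map with ${\rm S}(w_1\cdots w_n)={\rm S}(w_1)+\cdots+{\rm S}(w_n)$, determined by ${\rm S}(0),{\rm S}(1)\in\mathbb{N}$. *)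

From Stdlib Require Import Reals ZArith List Lia Lra.
Open Scope R_scope.

Definition Phi : R := (1 + sqrt 5) / 2.
Definition alpha : R := 2 - Phi.

Definition floorR (x : R) : Z := Int_part x.

Definition c_alpha (n : nat) : Z :=
  (floorR ((INR n + 2) * alpha) - floorR ((INR n + 1) * alpha))%Z.

Definition in_LF (w : list Z) : Prop :=
  w <> nil /\
  exists i : nat, forall k : nat, (k < length w)%nat -> nth k w 0%Z = c_alpha (i + k).

Definition S_letter (s0 s1 : nat) (x : Z) : nat := if Z.eqb x 0 then s0 else s1.
Definition S_hom (s0 s1 : nat) (w : list Z) : nat :=
  fold_right (fun x acc => (S_letter s0 s1 x + acc)%nat) 0%nat w.

Definition in_image (s0 s1 n : nat) : Prop :=
  exists w, in_LF w /\ S_hom s0 s1 w = n.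

Definition in_E (s0 s1 : nat) : Prop :=
  (s0, s1) = (1, 1)%nat \/ (s0, s1) = (1, 2)%nat \/
  (s0, s1) = (1, 3)%nat \/ (s0, s1) = (2, 1)%nat.

(* Let G j = beatty j = [j alpha].  The factor of length m at position i of c_alpha
   contains G (i + m + 1) - G (i + 1) ones, which is G m or G m + 1, and both values occur
   for every m >= 1: m alpha is irrational, and for a Fibonacci number j = F_n the number
   j alpha lies within psi^n of an integer, psi = (1 - sqrt 5) / 2, on the side given by
   the parity of n.  Hence S(L_F) is the set of weights s0 (m - k) + s1 k with m >= 1 and
   k in {G m, G m + 1}.  For the four pairs of E the weights of consecutive lengths m
   interlock and cover every n >= 1.  Otherwise either s0 = s1 = 2 and every weight is
   even, or a letter weighs s0 (1 - alpha) + s1 alpha >= 2.1 on average, so the weights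
   grow too fast to fill long intervals. *)

From Stdlib Require Import Reals ZArith List Lia Lra Psatz Classical.
Open Scope R_scope.

Definition psi : R := (1 - sqrt 5) / 2.

Lemma sqrt5_sqr : sqrt 5 * sqrt 5 = 5.
Proof. apply sqrt_sqrt; lra. Qed.

Lemma sqrt5_bounds : 2.236 < sqrt 5 < 2.2361.
Proof. pose proof sqrt5_sqr. pose proof (sqrt_pos 5). split; nra. Qed.

Lemma alpha_sqrt5 : alpha = (3 - sqrt 5) / 2.
Proof. unfold alpha, Phi. field. Qed.

Lemma alpha_bounds : 0.38 < alpha < 0.382.
Proof. rewrite alpha_sqrt5. pose proof sqrt5_bounds. lra. Qed.

Lemma alpha_psi : alpha = 1 + psi.
Proof. rewrite alpha_sqrt5. unfold psi. field. Qed.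

Lemma psi_sqr : psi * psi = alpha.
Proof. rewrite alpha_psi. unfold psi. pose proof sqrt5_sqr. nra. Qed.

Lemma Rabs_psi_lt_1 : Rabs psi < 1.
Proof. unfold psi. pose proof sqrt5_bounds. rewrite Rabs_left; lra. Qed.

Lemma floorR_spec x : IZR (floorR x) <= x < IZR (floorR x) + 1.
Proof. unfold floorR. destruct (base_Int_part x). lra. Qed.

Lemma floorR_unique x z : IZR z <= x < IZR z + 1 -> floorR x = z.
Proof. intros H. symmetry. apply Int_part_spec. lra. Qed.

Lemma floorR_add x y :
  floorR (x + y) = (floorR x + floorR y)%Z \/
  floorR (x + y) = (floorR x + floorR y + 1)%Z.
Proof.
  destruct (floorR_spec x), (floorR_spec y).
  destruct (Rlt_or_le (x + y) (IZR (floorR x + floorR y) + 1)).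
  - left. apply floorR_unique. rewrite plus_IZR in *. lra.
  - right. apply floorR_unique. rewrite !plus_IZR in *. lra.
Qed.

Definition beatty (j : nat) : Z := floorR (INR j * alpha).

Lemma beatty_spec j : IZR (beatty j) <= INR j * alpha < IZR (beatty j) + 1.
Proof. apply floorR_spec. Qed.

Lemma beatty_add a b :
  beatty (a + b) = (beatty a + beatty b)%Z \/
  beatty (a + b) = (beatty a + beatty b + 1)%Z.
Proof. unfold beatty. rewrite plus_INR, Rmult_plus_distr_r. apply floorR_add. Qed.

Lemma beatty_1 : beatty 1 = 0%Z.
Proof. apply floorR_unique. simpl. pose proof alpha_bounds. lra. Qed.

Lemma beatty_2 : beatty 2 = 0%Z.
Proof. apply floorR_unique. simpl. pose proof alpha_bounds. lra. Qed.

Lemma beatty_succ m : beatty (S m) = beatty m \/ beatty (S m) = (beatty m + 1)%Z.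
Proof. rewrite <- Nat.add_1_r. destruct (beatty_add m 1); rewrite beatty_1 in *; lia. Qed.

Lemma beatty_add2_le m : (beatty (m + 2) <= beatty m + 1)%Z.
Proof. destruct (beatty_add m 2); rewrite beatty_2 in *; lia. Qed.

Lemma c_alpha_beatty n : c_alpha n = (beatty (n + 2) - beatty (n + 1))%Z.
Proof.
  unfold c_alpha, beatty. rewrite !plus_INR.
  replace (INR 2) with 2 by (simpl; lra). replace (INR 1) with 1 by (simpl; lra).
  reflexivity.
Qed.

Lemma c_alpha_01 n : c_alpha n = 0%Z \/ c_alpha n = 1%Z.
Proof.
  rewrite c_alpha_beatty. replace (n + 2)%nat with (S (n + 1)) by lia.
  destruct (beatty_succ (n + 1)); lia.
Qed.

Lemma nth_map_c_alpha_seq k i m :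
  (k < m)%nat -> nth k (map c_alpha (seq i m)) 0%Z = c_alpha (i + k).
Proof.
  intros Hk. rewrite nth_indep with (d' := c_alpha 0) by (rewrite length_map, length_seq; lia).
  rewrite map_nth, seq_nth by lia. reflexivity.
Qed.

Lemma in_LF_iff w : in_LF w <-> exists i m, (1 <= m)%nat /\ w = map c_alpha (seq i m).
Proof.
  split.
  - intros [Hnil [i Hi]]. exists i, (length w). split.
    + destruct w; [congruence | simpl; lia].
    + apply nth_ext with (d := 0%Z) (d' := 0%Z).
      * rewrite length_map, length_seq. reflexivity.
      * intros k Hk. rewrite nth_map_c_alpha_seq, Hi; trivial.
  - intros (i & m & Hm & ->). split.
    + destruct m; [lia | discriminate].
    + exists i. intros k Hk. rewrite length_map, length_seq in Hk.
      apply nth_map_c_alpha_seq. exact Hk.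
Qed.

Definition ones (i m : nat) : Z := (beatty (i + m + 1) - beatty (i + 1))%Z.

Definition weight (s0 s1 m : nat) (k : Z) : Z :=
  (Z.of_nat s0 * (Z.of_nat m - k) + Z.of_nat s1 * k)%Z.

Lemma ones_succ i m : ones i (S m) = (c_alpha i + ones (S i) m)%Z.
Proof.
  unfold ones. rewrite c_alpha_beatty.
  replace (i + S m + 1)%nat with (S i + m + 1)%nat by lia.
  replace (S i + 1)%nat with (i + 2)%nat by lia. lia.
Qed.

Lemma S_hom_factor s0 s1 i m :
  Z.of_nat (S_hom s0 s1 (map c_alpha (seq i m))) = weight s0 s1 m (ones i m).
Proof.
  revert i. induction m as [|m IH]; intros i.
  - unfold weight, ones. rewrite Nat.add_0_r. simpl. lia.
  - cbn [seq map S_hom fold_right]. fold (S_hom s0 s1 (map c_alpha (seq (S i) m))).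
    rewrite Nat2Z.inj_add, IH, ones_succ. unfold S_letter, weight.
    rewrite Nat2Z.inj_succ.
    destruct (c_alpha_01 i) as [-> | ->]; simpl Z.eqb; cbv iota; ring.
Qed.

Lemma ones_balanced i m : ones i m = beatty m \/ ones i m = (beatty m + 1)%Z.
Proof.
  unfold ones. replace (i + m + 1)%nat with ((i + 1) + m)%nat by lia.
  destruct (beatty_add (i + 1) m); lia.
Qed.

Lemma five_dvd_sqr p : (5 | p * p)%Z -> (5 | p)%Z.
Proof.
  rewrite <- !Z.mod_divide by lia. rewrite Z.mul_mod by lia.
  pose proof (Z.mod_pos_bound p 5 ltac:(lia)).
  assert (p mod 5 = 0 \/ p mod 5 = 1 \/ p mod 5 = 2 \/ p mod 5 = 3 \/ p mod 5 = 4)%Z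
    as [E|[E|[E|[E|E]]]] by lia; rewrite E; easy.
Qed.

Lemma sqrt5_irrational p q : (p * p = 5 * q * q)%Z -> q = 0%Z.
Proof.
  remember (Z.abs_nat q) as n eqn:Hn. revert p q Hn.
  induction n as [n IH] using lt_wf_ind. intros p q Hn Hpq.
  assert (Hp : (5 | p)%Z) by (apply five_dvd_sqr; exists (q * q)%Z; lia).
  destruct Hp as [a ->].
  assert (Hq : (5 | q)%Z) by (apply five_dvd_sqr; exists (a * a)%Z; lia).
  destruct Hq as [b ->].
  enough (b = 0%Z) by lia.
  destruct (Z.eq_dec b 0) as [|Hb]; [assumption|].
  apply (IH (Z.abs_nat b)) with (p := a); [lia | reflexivity | nia].
Qed.

Lemma mul_alpha_not_integer m z : (1 <= m)%nat -> INR m * alpha <> IZR z.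
Proof.
  intros Hm H. rewrite alpha_sqrt5, INR_IZR_INZ in H.
  set (p := (3 * Z.of_nat m - 2 * z)%Z).
  assert (Hp : IZR p = sqrt 5 * IZR (Z.of_nat m)).
  { unfold p. rewrite minus_IZR, !mult_IZR. lra. }
  assert (Hsq : IZR (p * p) = IZR (5 * Z.of_nat m * Z.of_nat m)).
  { rewrite !mult_IZR, Hp. pose proof sqrt5_sqr. nra. }
  apply eq_IZR, sqrt5_irrational in Hsq. lia.
Qed.

Lemma psi_pow_SS n : psi ^ S (S n) = psi ^ n + psi ^ S n.
Proof. simpl. rewrite <- Rmult_assoc, psi_sqr, alpha_psi. ring. Qed.

Lemma mul_alpha_near_integer n :
  (1 <= n)%nat -> exists (j : nat) (z : Z), (1 <= j)%nat /\ INR j * alpha = IZR z + psi ^ n.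
Proof.
  intros Hn.
  assert (Hpair : forall k, exists (j j' : nat) (z z' : Z), (1 <= j)%nat /\ (1 <= j')%nat /\
    INR j * alpha = IZR z + psi ^ S k /\ INR j' * alpha = IZR z' + psi ^ S (S k)).
  { induction k as [|k (j & j' & z & z' & Hj & Hj' & E & E')].
    - exists 1%nat, 1%nat, 1%Z, 0%Z. rewrite alpha_psi at 1. rewrite <- psi_sqr.
      simpl. split; [lia|]. split; [lia|]. split; lra.
    - exists j', (j + j')%nat, z', (z + z')%Z. repeat split; [lia | lia | exact E' |].
      rewrite plus_INR, plus_IZR, Rmult_plus_distr_r, E, E', (psi_pow_SS (S k)). ring. }
  destruct n as [|k]; [lia|].
  destruct (Hpair k) as (j & _ & z & _ & Hj & _ & E & _). exists j, z. auto.
Qed.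

Lemma psi_pow_small eps :
  0 < eps -> exists n, (1 <= n)%nat /\ 0 < psi ^ n < eps /\ - eps < psi ^ S n < 0.
Proof.
  intros Heps. destruct (pow_lt_1_zero psi Rabs_psi_lt_1 eps Heps) as [N HN].
  exists (2 * S N)%nat.
  assert (Hpos : 0 < psi ^ (2 * S N)).
  { rewrite pow_mult. replace (psi ^ 2) with alpha by (rewrite <- psi_sqr; ring).
    apply pow_lt. pose proof alpha_bounds. lra. }
  assert (H1 := HN (2 * S N)%nat ltac:(lia)). assert (H2 := HN (S (2 * S N)) ltac:(lia)).
  assert (Hneg : psi ^ S (2 * S N) < 0).
  { change (psi ^ S (2 * S N)) with (psi * psi ^ (2 * S N)).
    assert (psi < 0) by (unfold psi; pose proof sqrt5_bounds; lra). nra. }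
  rewrite Rabs_pos_eq in H1 by lra. rewrite Rabs_left in H2 by lra.
  repeat split; lra || lia.
Qed.

Lemma ones_shift j m z d :
  (1 <= j)%nat -> INR j * alpha = IZR z + d ->
  0 <= INR m * alpha - IZR (beatty m) + d < 1 ->
  ones (j - 1) m = (z + beatty m - beatty j)%Z.
Proof.
  intros Hj Hjz Hd. unfold ones.
  replace (j - 1 + m + 1)%nat with (j + m)%nat by lia.
  replace (j - 1 + 1)%nat with j by lia.
  enough (beatty (j + m) = (z + beatty m)%Z) by lia.
  apply floorR_unique. rewrite plus_INR, Rmult_plus_distr_r, Hjz, plus_IZR. lra.
Qed.

Lemma ones_attains m :
  (1 <= m)%nat ->
  (exists i, ones i m = beatty m) /\ (exists i, ones i m = (beatty m + 1)%Z).
Proof.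
  intros Hm. pose proof (beatty_spec m) as Hb.
  set (x := INR m * alpha - IZR (beatty m)).
  assert (Hx : 0 < x < 1).
  { unfold x. split; [|lra].
    destruct (Rle_lt_or_eq_dec _ _ (proj1 Hb)) as [|E]; [lra|].
    exfalso. exact (mul_alpha_not_integer m (beatty m) Hm (eq_sym E)). }
  destruct (psi_pow_small (Rmin x (1 - x))) as (n & Hn & Hlo & Hhi).
  { apply Rmin_glb_lt; lra. }
  pose proof (Rmin_l x (1 - x)). pose proof (Rmin_r x (1 - x)).
  split.
  - destruct (mul_alpha_near_integer n Hn) as (j & z & Hj & Hjz).
    exists (j - 1)%nat. rewrite (ones_shift j m z (psi ^ n)) by (auto; unfold x in *; lra).
    enough (beatty j = z) by lia.
    apply floorR_unique. lra.
  - destruct (mul_alpha_near_integer (S n) ltac:(lia)) as (j & z & Hj & Hjz).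
    exists (j - 1)%nat. rewrite (ones_shift j m z (psi ^ S n)) by (auto; unfold x in *; lra).
    enough (beatty j = (z - 1)%Z) by lia.
    apply floorR_unique. rewrite minus_IZR. lra.
Qed.

Definition balanced_weight (s0 s1 n : nat) : Prop :=
  exists m, (1 <= m)%nat /\
    (Z.of_nat n = weight s0 s1 m (beatty m) \/ Z.of_nat n = weight s0 s1 m (beatty m + 1)).

Lemma in_image_iff s0 s1 n : in_image s0 s1 n <-> balanced_weight s0 s1 n.
Proof.
  split.
  - intros (w & Hw & <-). apply in_LF_iff in Hw as (i & m & Hm & ->).
    exists m. split; [exact Hm|]. rewrite S_hom_factor.
    destruct (ones_balanced i m) as [E|E]; rewrite E; auto.
  - intros (m & Hm & Hn). destruct (ones_attains m Hm) as [[i0 E0] [i1 E1]].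
    destruct Hn as [Hn|Hn];
      [exists (map c_alpha (seq i0 m)) | exists (map c_alpha (seq i1 m))];
      (split; [apply in_LF_iff; eauto|]);
      apply Nat2Z.inj; rewrite S_hom_factor; congruence.
Qed.

Lemma increasing_bracket (h : nat -> Z) :
  (forall m, (1 <= m)%nat -> (h m < h (S m))%Z) ->
  forall n, (h 1%nat <= n)%Z -> exists m, (1 <= m)%nat /\ (h m <= n < h (S m))%Z.
Proof.
  intros Hinc n Hn.
  replace n with (h 1%nat + Z.of_nat (Z.to_nat (n - h 1%nat)))%Z by lia.
  induction (Z.to_nat (n - h 1%nat)) as [|d (m & Hm & Hd)].
  - exists 1%nat. specialize (Hinc 1%nat). lia.
  - destruct (Z_lt_le_dec (h 1%nat + Z.of_nat (S d)) (h (S m))).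
    + exists m. lia.
    + exists (S m). specialize (Hinc (S m)). lia.
Qed.

Lemma balanced_weight_1_1 n : (1 <= n)%nat -> balanced_weight 1 1 n.
Proof. intros Hn. exists n. split; [exact Hn|]. left. unfold weight. lia. Qed.

Lemma balanced_weight_1_2 n : (1 <= n)%nat -> balanced_weight 1 2 n.
Proof.
  intros Hn.
  destruct (increasing_bracket (fun m => Z.of_nat m + beatty m)%Z) with (n := Z.of_nat n)
    as (m & Hm & Hb).
  { intros m _. destruct (beatty_succ m); lia. }
  { rewrite beatty_1. lia. }
  exists m. split; [exact Hm|]. unfold weight.
  destruct (beatty_succ m); lia.
Qed.

Lemma balanced_weight_1_3 n : (1 <= n)%nat -> balanced_weight 1 3 n.
Proof.
  intros Hn.
  destruct (increasing_bracket (fun m => Z.of_nat m + 2 * beatty m)%Z) with (n := Z.of_nat n)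
    as (m & Hm & Hb).
  { intros m _. destruct (beatty_succ m); lia. }
  { rewrite beatty_1. lia. }
  destruct (beatty_succ m) as [E|E].
  { exists m. split; [exact Hm|]. unfold weight. lia. }
  destruct (Z.eq_dec (Z.of_nat n) (Z.of_nat m + 2 * beatty m + 1)) as [Hmid|Hmid].
  - (* a jump of beatty at m forces beatty (m - 1) = beatty m, so length m - 1
       reaches the middle value *)
    assert (Hm2 : (2 <= m)%nat).
    { destruct (Nat.eq_dec m 1) as [->|]; [|lia]. rewrite beatty_1, beatty_2 in E. lia. }
    pose proof (beatty_add2_le (m - 1)) as H2. pose proof (beatty_succ (m - 1)) as H1.
    replace (m - 1 + 2)%nat with (S m) in H2 by lia.
    replace (S (m - 1)) with m in H1 by lia.
    exists (m - 1)%nat. split; [lia|]. right. unfold weight. lia.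
  - exists m. split; [exact Hm|]. unfold weight. lia.
Qed.

Lemma balanced_weight_2_1 n : (1 <= n)%nat -> balanced_weight 2 1 n.
Proof.
  intros Hn.
  destruct (increasing_bracket (fun m => 2 * Z.of_nat m - beatty m - 1)%Z)
    with (n := Z.of_nat n) as (m & Hm & Hb).
  { intros m _. destruct (beatty_succ m); lia. }
  { rewrite beatty_1. lia. }
  exists m. split; [exact Hm|]. unfold weight.
  destruct (beatty_succ m); lia.
Qed.

Lemma balanced_weight_in_E s0 s1 n :
  in_E s0 s1 -> (1 <= n)%nat -> balanced_weight s0 s1 n.
Proof.
  intros [E|[E|[E|E]]]; injection E as -> ->.
  - apply balanced_weight_1_1.
  - apply balanced_weight_1_2.
  - apply balanced_weight_1_3.
  - apply balanced_weight_2_1.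
Qed.

Lemma balanced_weight_2_2_odd N : ~ balanced_weight 2 2 (2 * N + 1).
Proof. intros (m & _ & Hn). unfold weight in Hn. lia. Qed.

Definition mean_weight (s0 s1 : nat) : R := INR s0 * (1 - alpha) + INR s1 * alpha.

Lemma weight_ge_mean s0 s1 m k :
  INR m * alpha - 1 < IZR k <= INR m * alpha + 1 ->
  mean_weight s0 s1 * INR m - INR (s0 + s1) <= IZR (weight s0 s1 m k).
Proof.
  intros Hk. unfold weight, mean_weight.
  rewrite plus_IZR, !mult_IZR, minus_IZR, <- !INR_IZR_INZ, plus_INR.
  pose proof (pos_INR s0). pose proof (pos_INR s1).
  set (e := IZR k - INR m * alpha).
  assert (He : -1 < e <= 1) by (unfold e; lra).
  replace (IZR k) with (INR m * alpha + e) by (unfold e; ring).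
  assert (0 <= INR s0 * (1 - e)) by (apply Rmult_le_pos; lra).
  assert (0 <= INR s1 * (1 + e)) by (apply Rmult_le_pos; lra).
  nra.
Qed.

Lemma balanced_weight_index_le s0 s1 n m k :
  21 / 10 <= mean_weight s0 s1 ->
  (k = beatty m \/ k = (beatty m + 1)%Z) -> Z.of_nat n = weight s0 s1 m k ->
  (21 * m <= 10 * (n + s0 + s1))%nat.
Proof.
  intros Hmean Hk Hn. apply INR_le.
  assert (Hb : INR m * alpha - 1 < IZR k <= INR m * alpha + 1).
  { pose proof (beatty_spec m). destruct Hk as [->| ->]; rewrite ?plus_IZR; lra. }
  pose proof (weight_ge_mean s0 s1 m k Hb) as Hw.
  rewrite <- Hn, <- INR_IZR_INZ in Hw.
  rewrite !mult_INR, !plus_INR in *. pose proof (pos_INR m). simpl INR. nra.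
Qed.

Lemma seq_incl_length a len (l : list nat) : incl (seq a len) l -> (len <= length l)%nat.
Proof.
  intros H. rewrite <- (length_seq len a). exact (NoDup_incl_length (seq_NoDup len a) H).
Qed.

(* Values of words of length m <= M fill at most 2M slots, and longer words weigh
   more than 2M + N + 1, so the 2M + 1 numbers in (N, 2M + N + 1] cannot all be values. *)
Lemma balanced_weight_gaps s0 s1 :
  21 / 10 <= mean_weight s0 s1 ->
  forall N, exists n, (N < n)%nat /\ ~ balanced_weight s0 s1 n.
Proof.
  intros Hmean N. apply NNPP. intros Hnone.
  set (M := (10 * (N + s0 + s1 + 1))%nat).
  set (values b := map (fun m => Z.to_nat (weight s0 s1 m (beatty m + b))) (seq 1 M)).
  assert (Hincl : incl (seq (S N) (S (2 * M))) (values 0%Z ++ values 1%Z)).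
  { intros n Hn. apply in_seq in Hn.
    assert (Hbw : balanced_weight s0 s1 n).
    { apply NNPP. intros Hgap. apply Hnone. exists n. split; [lia | exact Hgap]. }
    destruct Hbw as (m & Hm & Hv).
    assert (HmM : (m <= M)%nat).
    { destruct Hv as [Hv|Hv]; apply balanced_weight_index_le in Hv; auto; lia. }
    apply in_app_iff.
    destruct Hv as [Hv|Hv]; [left | right]; apply in_map_iff; exists m;
      rewrite ?Z.add_0_r, <- Hv, Nat2Z.id; split; trivial; apply in_seq; lia. }
  apply seq_incl_length in Hincl.
  unfold values in Hincl. rewrite length_app, !length_map, length_seq in Hincl. lia.
Qed.

Lemma not_in_E_cases s0 s1 :
  (1 <= s0)%nat -> (1 <= s1)%nat -> ~ in_E s0 s1 ->
  (s0 = 2 /\ s1 = 2)%nat \/ 21 / 10 <= mean_weight s0 s1.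
Proof.
  intros h0 h1 hE. unfold mean_weight. pose proof alpha_bounds.
  pose proof (le_INR _ _ h0). pose proof (le_INR _ _ h1). simpl INR in *.
  destruct (Nat.le_gt_cases 3 s0) as [H3|H3].
  { right. apply le_INR in H3. simpl INR in H3. nra. }
  assert (s0 = 1 \/ s0 = 2)%nat as [-> | ->] by lia.
  - destruct (Nat.le_gt_cases 4 s1) as [H4|H4].
    + right. apply le_INR in H4. simpl INR in *. nra.
    + exfalso. apply hE. unfold in_E.
      assert (s1 = 1 \/ s1 = 2 \/ s1 = 3)%nat as [-> | [-> | ->]] by lia; auto.
  - destruct (Nat.le_gt_cases 3 s1) as [H3'|H3'].
    + right. apply le_INR in H3'. simpl INR in *. nra.
    + assert (s1 = 1 \/ s1 = 2)%nat as [-> | ->] by lia; [|auto].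
      exfalso. apply hE. unfold in_E. auto.
Qed.

Theorem theorem6 (s0 s1 : nat) (h0 : (1 <= s0)%nat) (h1 : (1 <= s1)%nat) :
  (in_E s0 s1 -> forall n : nat, (1 <= n)%nat -> in_image s0 s1 n) /\
  (~ in_E s0 s1 ->
     forall N : nat, exists n : nat, (N < n)%nat /\ ~ in_image s0 s1 n).
Proof.
  split.
  - intros hE n hn. apply in_image_iff. exact (balanced_weight_in_E s0 s1 n hE hn).
  - intros hE N.
    assert (Hgaps : exists n, (N < n)%nat /\ ~ balanced_weight s0 s1 n).
    { destruct (not_in_E_cases s0 s1 h0 h1 hE) as [[-> ->] | Hmean].
      - exists (2 * N + 1)%nat. split; [lia | apply balanced_weight_2_2_odd].
      - exact (balanced_weight_gaps s0 s1 Hmean N). }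
    destruct Hgaps as (n & Hn & Hgap). exists n. rewrite in_image_iff. auto.
Qed.
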